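(* Let $H \in \mathcal{M}_n(\mathbb{R})$ be a real symmetric matrix whose largest eigenvalue (spectral radius) is simple. Then $H$ has exactly $k$ distinct eigenvalues, where $2 \le k \le n$, if and only if there are $k$ distinct real numbers $\lambda_1, \lambda_2, \ldots, \lambda_k$ such that (i) $H - \lambda_i I$ is a singular matrix for every $2 \le i \le k$; and (ii) $\prod_{i=2}^{k}(H - \lambda_i I) = b\,\mathbf{y}\mathbf{y}^T$, where $b$ is a positive real number, $\mathbf{y} \in \mathbb{R}^n\setminus\{\mathbf{0}\}$ and $H\mathbf{y} = \lambda_1\mathbf{y}$. Moreover, in this case $\lambda_1, \ldots, \lambda_k$ are exactly the $k$ distinct eigenvalues of $H$.
   Context: $\mathcal{M}_n(\mathbb{R})$ is the set of $n\times n$ real matrices and $I$ the identity matrix. The spectral radius here means the largest eigenvalue; it is simple if its algebraic multiplicity is $1$. *)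

From mathcomp Require Import all_boot all_order all_algebra.
From mathcomp Require Import reals.
Set Implicit Arguments. Unset Strict Implicit. Unset Printing Implicit Defensive.
Import Order.TTheory GRing.Theory Num.Theory.
Local Open Scope ring_scope.

Definition symmetric_mx (R : realType) (n : nat) (H : 'M[R]_n) : Prop := H^T = H.

Definition largest_eigenvalue_simple (R : realType) (n : nat) (H : 'M[R]_n) : Prop :=
  exists l : R, eigenvalue H l /\ (forall m : R, eigenvalue H m -> m <= l)
                /\ mup l (char_poly H) = 1%N.

Definition num_distinct_eigenvalues (R : realType) (n : nat) (H : 'M[R]_n) (k : nat) : Prop :=
  exists s : seq R, [/\ uniq s, size s = k & forall a : R, eigenvalue H a <-> a \in s].

(* Conditions (i) and (ii) for the reals lam 0, ..., lam (k-1) (0-indexed: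
   lam 0 is lambda_1, lam i is lambda_(i+1)). *)
Definition cor27_conditions (R : realType) (n k : nat) (H : 'M[R]_n) (lam : nat -> R) : Prop :=
  [/\
      (forall i j : nat, (i < k)%N -> (j < k)%N -> lam i = lam j -> i = j),
      (forall i : nat, (1 <= i < k)%N -> (H - (lam i)%:M) \notin unitmx) &
      (exists (b : R) (y : 'cV[R]_n),
        [/\ 0 < b, y != 0, H *m y = lam 0%N *: y &
            \prod_(1 <= i < k) (H - (lam i)%:M) = b *: (y *m y^T)])].

From mathcomp Require Import all_boot all_order all_algebra.
From mathcomp Require Import reals complex.
Set Implicit Arguments. Unset Strict Implicit. Unset Printing Implicit Defensive.
Import Order.TTheory GRing.Theory Num.Theory.
Local Open Scope ring_scope.

(* Diagonalise H and let lambda_1 be its simple top eigenvalue and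
   lambda_2, ..., lambda_k the others.  With p := prod_(i >= 2) (X - lambda_i),
   p(H) kills every eigenline except that of lambda_1, so p(H) is p(lambda_1) > 0
   times a rank-one idempotent y w (w y = 1); symmetry of p(H) then forces
   w = y^T / (y^T y).  Conversely, if prod_(i >= 2) (H - lambda_i) = b y y^T, a
   left eigenvector for an eigenvalue a outside lambda_2, ..., lambda_k is mapped
   by this product to a nonzero multiple of itself, so it is proportional to y^T
   and a = lambda_1. *)

Lemma count_mem_map_enum1 (T : finType) (U : eqType) (f : T -> U) x :
  count_mem x [seq f i | i <- enum T] = 1%N -> exists j, forall i, (f i == x) = (i == j).
Proof.
rewrite count_map enumT -size_filter (_ : filter _ _ = enum (preim f (pred1 x))).
  by rewrite -cardE => /eqP /card1P [j jP]; exists j => i; have := jP i; rewrite !inE.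
by apply: eq_filter.
Qed.

Lemma big_nat1_nth_cons (T R : Type) (idx : R) (op : R -> R -> R) (F : T -> R)
    (x0 x : T) (s : seq T) :
  \big[op/idx]_(1 <= i < (size s).+1) F (nth x0 (x :: s) i) = \big[op/idx]_(y <- s) F y.
Proof. by rewrite big_add1 /= [RHS](big_nth x0). Qed.

Lemma mulmx_eq1_neq0 (R : nzRingType) n (w : 'rV[R]_n) (y : 'cV[R]_n) :
  w *m y = 1 -> y != 0.
Proof.
move=> wy; apply/eqP => y0; move: wy; rewrite y0 mulmx0.
by move/matrixP/(_ 0 0); rewrite !mxE => /eqP; rewrite eq_sym oner_eq0.
Qed.

Lemma diag_mx_delta (R : nzRingType) n (i : 'I_n) :
  diag_mx (delta_mx 0 i) = delta_mx i (0 : 'I_1) *m delta_mx 0 i :> 'M[R]_n.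
Proof.
rewrite mul_delta_mx; apply/matrixP => j l; rewrite !mxE eqxx /=.
case: (eqVneq j l) => [<-|jl]; rewrite ?andbb //.
by case: eqP => // ji; rewrite -ji eq_sym (negPf jl).
Qed.

Lemma eigenvalue_unitmx (F : fieldType) n (A : 'M[F]_n) a :
  eigenvalue A a = (A - a%:M \notin unitmx).
Proof. by rewrite /eigenvalue /eigenspace kermx_eq0 row_free_unit. Qed.

Lemma char_poly_similar (F : comUnitRingType) n (Q A B : 'M[F]_n) :
  Q \in unitmx -> Q *m A = B *m Q -> char_poly A = char_poly B.
Proof.
move=> Qu QA; pose Qp := map_mx polyC Q; pose Qi := map_mx polyC (invmx Q).
have QiQp : Qi *m Qp = 1%:M by rewrite -map_mxM mulVmx // map_mx1.
have AE : char_poly_mx A = Qi *m char_poly_mx B *m Qp.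
  rewrite /char_poly_mx -[A](mulKmx Qu) QA !map_mxM -/Qp -/Qi mulmxA mulmxBr mulmxBl.
  by rewrite mul_mx_scalar -scalemxAl QiQp -mul_scalar_mx mulmx1.
by rewrite /char_poly AE !det_mulmx mulrAC -det_mulmx QiQp det1 mul1r.
Qed.

Lemma trmx_horner_mx (R : comNzRingType) n (A : 'M[R]_n.+1) p :
  (horner_mx A p)^T = horner_mx A^T p.
Proof.
elim/poly_ind: p => [|p c IHp]; first by rewrite !rmorph0 trmx0.
rewrite !rmorphD !rmorphM /= !horner_mx_X !horner_mx_C linearD /= trmx_mul IHp.
by rewrite tr_scalar_mx (comm_mx_horner _ (comm_mx_refl _)).
Qed.

Lemma horner_mx_prod_XsubC (R : comNzRingType) n (A : 'M[R]_n.+1) (r : seq R) :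
  horner_mx A (\prod_(x <- r) ('X - x%:P)) = \prod_(x <- r) (A - x%:M).
Proof.
rewrite rmorph_prod; apply: eq_bigr => x _.
by rewrite rmorphB /= horner_mx_X horner_mx_C.
Qed.

Lemma row_eigen_prod_sub (R : comNzRingType) n (A : 'M[R]_n) (v : 'rV[R]_n) a
    (r : seq R) :
  v *m A = a *: v -> v *m \prod_(x <- r) (A - x%:M) = (\prod_(x <- r) (a - x)) *: v.
Proof.
move=> vA; elim: r => [|x r IHr]; first by rewrite !big_nil mulmx1 scale1r.
rewrite !big_cons -mulmxE mulmxA mulmxBr vA mul_mx_scalar -scalerBl -scalemxAl IHr.
by rewrite scalerA.
Qed.

Lemma horner_mx_eigenprojector (F : fieldType) n (Q A : 'M[F]_n.+1) (d : 'rV[F]_n.+1)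
    j0 p :
  Q \in unitmx -> Q *m A = diag_mx d *m Q -> (forall j, j != j0 -> p.[d 0 j] = 0) ->
  exists (y : 'cV_n.+1) (w : 'rV_n.+1),
    [/\ w *m y = 1, A *m y = d 0 j0 *: y & horner_mx A p = p.[d 0 j0] *: (y *m w)].
Proof.
move=> Qu QA pd; have AE : A = invmx Q *m diag_mx d *m Q by rewrite -mulmxA -QA mulKmx.
exists (invmx Q *m delta_mx j0 0), (delta_mx 0 j0 *m Q); split.
- rewrite mulmxA -(mulmxA _ Q) mulmxV // mulmx1 mul_delta_mx.
  by apply/matrixP => i j; rewrite !ord1 !mxE.
- rewrite AE -!mulmxA mulKVmx // mul_diag_mx scalemxAr; congr (_ *m _).
  by apply/matrixP => i j; rewrite !mxE; case: (eqVneq i j0) => [->|]; rewrite ?mulr0.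
have pdE : map_mx (horner p) d = p.[d 0 j0] *: delta_mx 0 j0.
  apply/matrixP => i j; rewrite !mxE ord1 eqxx /=.
  by case: (eqVneq j j0) => [->|/pd ->]; rewrite ?mulr1 ?mulr0.
rewrite {1}AE horner_mx_uconjC // horner_mx_diag pdE linearZ /= diag_mx_delta.
by rewrite -scalemxAr -scalemxAl !mulmxA.
Qed.

Lemma trmx_mul_self_gt0 (R : realDomainType) n (y : 'cV[R]_n) :
  y != 0 -> 0 < (y^T *m y) 0 0.
Proof.
case/matrix0Pn => i [j]; rewrite ord1 => yi0.
rewrite mxE (bigD1 i) //= mxE ltr_pwDl ?sumr_ge0 // => [|t _].
  by rewrite -expr2 exprn_even_gt0.
by rewrite mxE -expr2 sqr_ge0.
Qed.

Lemma symmetric_outer_mx (R : realFieldType) n (y : 'cV[R]_n) (w : 'rV[R]_n) :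
  w *m y = 1 -> (y *m w)^T = y *m w ->
  y *m w = ((y^T *m y) 0 0)^-1 *: (y *m y^T).
Proof.
move=> wy ywT; set ny := (y^T *m y) 0 0.
have ny_gt0 : 0 < ny by apply/trmx_mul_self_gt0/(mulmx_eq1_neq0 wy).
have yT : y^T = ny *: w.
  rewrite -[w]trmxK -linearZ /=; congr (_^T).
  rewrite -mul_mx_scalar -mx11_scalar.
  by rewrite mulmxA -trmx_mul ywT -mulmxA wy mulmx1.
by rewrite yT -scalemxAr scalerA mulVf ?scale1r ?lt0r_neq0.
Qed.

Lemma eigenvalue_prod_rank_one (F : fieldType) n (H : 'M[F]_n) (r : seq F) b l
    (y : 'cV[F]_n) :
  H^T = H -> H *m y = l *: y -> \prod_(x <- r) (H - x%:M) = b *: (y *m y^T) ->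
  forall a, eigenvalue H a -> a = l \/ a \in r.
Proof.
move=> Hsym Hy Pr a /eigenvalueP [v vH v0].
have [ar|anr] := boolP (a \in r); [by right | left].
set c := \prod_(x <- r) (a - x).
have c0 : c != 0.
  rewrite prodf_seq_neq0; apply/allP => x xr /=.
  by rewrite subr_eq0; apply: contraNneq anr => ->.
have yH : y^T *m H = l *: y^T by rewrite -{1}Hsym -trmx_mul Hy linearZ.
have vE : v = (c^-1 * b * (v *m y) 0 0) *: y^T.
  apply: (scalerI c0); rewrite -(row_eigen_prod_sub r vH) Pr -scalemxAr mulmxA.
  set s := (v *m y) 0 0; rewrite [v *m y]mx11_scalar -/s mul_scalar_mx !scalerA.
  by rewrite !mulrA mulfV // mul1r.
have : (a - l) *: v = 0.
  by rewrite scalerBl -vH {1}vE -scalemxAl yH scalerA mulrC -scalerA -vE subrr.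
by move/eqP; rewrite scaler_eq0 (negPf v0) orbF subr_eq0 => /eqP.
Qed.

Lemma realmx_ReK (R : rcfType) m n (M : 'M[R[i]]_(m, n)) : M \is a realmx ->
  map_mx (real_complex R) (map_mx (@complex.Re R) M) = M.
Proof. by move/mxOverP=> Mr; apply/matrixP => i j; rewrite !mxE RRe_real ?Mr. Qed.

(* Spectral theorem for the Hermitian complexification, then a real change of
   basis by real_similar. *)
Lemma symmetric_mx_diagonalizable (R : rcfType) n (H : 'M[R]_n) : H^T = H ->
  exists Q (d : 'rV[R]_n), Q \in unitmx /\ Q *m H = diag_mx d *m Q.
Proof.
move=> Hsym; pose Hc := map_mx (real_complex R) H.
have Hreal : Hc \is a realmx.
  by apply/mxOverP => i j; rewrite mxE; apply/complex_realP; exists (H i j).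
have Hherm : Hc \is hermsymmx.
  apply: realsym_hermsym Hreal; apply/is_hermitianmxP.
  by rewrite expr0 scale1r map_mx_id // map_trmx Hsym.
have /orthomx_spectralP HcE := hermitian_normalmx Hherm.
have sp_real := hermitian_spectral_diag_real Hherm.
set P := spectralmx Hc in HcE; set sp := spectral_diag Hc in HcE sp_real.
have Pu : P \in unitmx by apply: spectral_unit.
have Hc_sim : similar_in unitmx Hc (diag_mx sp).
  by exists P => //; apply/similarP => //; rewrite {1}HcE !mulmxA mulmxV // mul1mx.
have Dreal : diag_mx sp \is a realmx by apply: mxOver_diag; rewrite ?real0.
have [Q /andP[Qreal Qu] /(similarP Qu) QE] := real_similar Hc_sim Hreal Dreal.
exists (map_mx (@complex.Re R) Q), (map_mx (@complex.Re R) sp); split.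
  by rewrite -(map_unitmx (real_complex R)) realmx_ReK.
apply: (map_mx_inj (f := real_complex R)).
by rewrite !map_mxM map_diag_mx !realmx_ReK.
Qed.

Lemma prod_sub_other_eigenvalues (R : rcfType) n (H : 'M[R]_n.+1) l (r : seq R) :
  H^T = H -> (forall m, eigenvalue H m -> m <= l) -> mup l (char_poly H) = 1%N ->
  (forall x, (x \in r) = (x != l) && eigenvalue H x) ->
  exists b (y : 'cV_n.+1),
    [/\ 0 < b, y != 0, H *m y = l *: y & \prod_(x <- r) (H - x%:M) = b *: (y *m y^T)].
Proof.
move=> Hsym lmax lsimple rE.
have [Q [d [Qu QH]]] := symmetric_mx_diagonalizable Hsym.
pose ds := [seq d 0 j | j <- enum 'I_n.+1].
have charH : char_poly H = \prod_(x <- ds) ('X - x%:P).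
  rewrite (char_poly_similar Qu QH) char_poly_trig ?diag_mx_is_trig //.
  by rewrite big_map big_enum /=; apply: eq_bigr => j _; rewrite mxE eqxx mulr1n.
have [j0 j0E] : exists j0, forall j, (d 0 j == l) = (j == j0).
  by apply: count_mem_map_enum1; rewrite -mu_prod_XsubC -charH.
pose p := \prod_(x <- r) ('X - x%:P).
have pd j : j != j0 -> p.[d 0 j] = 0.
  move=> jj0; apply/rootP; rewrite root_prod_XsubC rE j0E jj0.
  by rewrite eigenvalue_root_char charH root_prod_XsubC map_f ?mem_enum.
have [y [w [wy Hy pH]]] := horner_mx_eigenprojector Qu QH pd.
have dj0 : d 0 j0 = l by apply/eqP; rewrite j0E.
rewrite dj0 in Hy pH.
have pl_gt0 : 0 < p.[l].
  rewrite horner_prod big_seq; apply: prodr_gt0 => x.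
  by rewrite rE hornerXsubC subr_gt0 lt_def eq_sym => /andP[-> /lmax].
have ywT : (y *m w)^T = y *m w.
  apply: (scalerI (lt0r_neq0 pl_gt0)).
  by rewrite -linearZ /= -pH trmx_horner_mx Hsym.
have y0 := mulmx_eq1_neq0 wy.
exists (p.[l] / (y^T *m y) 0 0), y; split => //.
  by rewrite divr_gt0 ?trmx_mul_self_gt0.
by rewrite -horner_mx_prod_XsubC pH (symmetric_outer_mx wy ywT) scalerA.
Qed.

Lemma cor27_conditions_of_eigenvalues (R : realType) n k (H : 'M[R]_n.+1) :
  H^T = H -> largest_eigenvalue_simple H -> num_distinct_eigenvalues H k ->
  exists lam : nat -> R, cor27_conditions k H lam.
Proof.
move=> Hsym [l [Hl [lmax lsimple]]] [s [s_uniq s_size sE]].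
have {}sE x : eigenvalue H x = (x \in s) by apply/idP/idP => /sE.
pose r := rem l s.
have rE x : (x \in r) = (x != l) && eigenvalue H x by rewrite mem_rem_uniq // sE.
have lr_uniq : uniq (l :: r) by rewrite /= mem_rem_uniqF // rem_uniq.
have ls : l \in s by rewrite -sE.
have lr_size : size (l :: r) = k.
  by rewrite /= size_rem // s_size prednK // -s_size; case: (s) ls.
exists (nth 0 (l :: r)); split.
- by move=> i j ik jk /eqP; rewrite nth_uniq ?lr_size // => /eqP.
- move=> i /andP[i1 ik]; case: i i1 ik => // i _ ik; rewrite -eigenvalue_unitmx.
  have : nth 0 r i \in r by rewrite mem_nth // -ltnS -/(size (l :: r)) lr_size.
  by rewrite rE => /andP[].
rewrite -lr_size (@big_nat1_nth_cons _ _ _ _ (fun x => H - x%:M)).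
exact: prod_sub_other_eigenvalues Hsym lmax lsimple rE.
Qed.

Lemma cor27_conditions_eigenvalues (R : realType) n k (H : 'M[R]_n) (lam : nat -> R) :
  H^T = H -> (0 < k)%N -> cor27_conditions k H lam ->
  forall a, eigenvalue H a <-> exists2 i, (i < k)%N & lam i = a.
Proof.
move=> Hsym k0 [_ lam_sing [b [y [_ y0 Hy prodE]]]] a; split.
  rewrite -(big_map lam xpredT (fun x => H - x%:M)) in prodE.
  move/(eigenvalue_prod_rank_one Hsym Hy prodE) => [->|]; first by exists 0%N.
  case/mapP => i; rewrite mem_index_iota => /andP[_ ik] ->; by exists i.
case=> -[_ <-|i ik <-]; last by rewrite eigenvalue_unitmx lam_sing.
apply/eigenvalueP; exists y^T; first by rewrite -{1}Hsym -trmx_mul Hy linearZ.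
by rewrite -(inj_eq trmx_inj) trmxK trmx0.
Qed.

Lemma cor27_conditions_num_eigenvalues (R : realType) n k (H : 'M[R]_n)
    (lam : nat -> R) :
  H^T = H -> (0 < k)%N -> cor27_conditions k H lam -> num_distinct_eigenvalues H k.
Proof.
move=> Hsym k0 lamP; have eigH := cor27_conditions_eigenvalues Hsym k0 lamP.
case: lamP => lam_inj _ _; exists [seq lam i | i <- iota 0 k]; split.
- rewrite map_inj_in_uniq ?iota_uniq // => i j.
  by rewrite !mem_iota !add0n; exact: lam_inj.
- by rewrite size_map size_iota.
move=> a; rewrite eigH; split=> [[i ik <-]|]; first by rewrite map_f // mem_iota.
by case/mapP => i; rewrite mem_iota add0n => ik ->; exists i.
Qed.

Theorem corollary2p7 (R : realType) (n k : nat) (H : 'M[R]_n) :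
  symmetric_mx H -> largest_eigenvalue_simple H -> (2 <= k <= n)%N ->
  (num_distinct_eigenvalues H k <-> exists lam : nat -> R, cor27_conditions k H lam) /\
  (forall lam : nat -> R, cor27_conditions k H lam ->
     forall a : R, eigenvalue H a <-> exists2 i : nat, (i < k)%N & lam i = a).
Proof.
move=> Hsym Hsimple /andP[k2 kn]; have k0 : (0 < k)%N := ltnW k2.
split; last by move=> lam; exact: cor27_conditions_eigenvalues.
split; last by case=> lam; exact: cor27_conditions_num_eigenvalues.
case: n H Hsym Hsimple kn => [|n] H Hsym Hsimple kn.
  by have := leq_trans k2 kn.
exact: cor27_conditions_of_eigenvalues.
Qed.
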